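(* Let $\mathbf{A}$ be an algebra and $B$ a subuniverse of $\mathbf{A}$. If $B$ absorbs $\mathbf{A}$, then $B$ Jónsson absorbs $\mathbf{A}$.
   Context: Absorption: a subuniverse $B$ of $\mathbf{A}$ absorbs $\mathbf{A}$ if there is an idempotent term $t$ of $\mathbf{A}$, say $n$-ary, such that $t(a_1,\dots,a_n)\in B$ whenever all but at most one of the $a_i$ lie in $B$ and the remaining one lies in $A$. Jónsson absorption: a subuniverse $B$ of $\mathbf{A}$ Jónsson absorbs $\mathbf{A}$ if there are ternary terms $d_0,\dots,d_n$ of $\mathbf{A}$ such that $d_i(b,a,b')\in B$ for all $i$, all $b,b'\in B$, $a\in A$; $d_i(x,y,y)=d_{i+1}(x,x,y)$ for all $i<n$ and all $x,y\in A$; $d_0(x,y,z)=x$ and $d_n(x,y,z)=z$ for all $x,y,z\in A$. *)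

From mathcomp Require Import all_boot.
Set Implicit Arguments. Unset Strict Implicit. Unset Printing Implicit Defensive.

Record signature := Signature { op_sym : Type; arity : op_sym -> nat }.

Record algebra (S : signature) := Algebra {
  carrier :> Type;
  interp : forall f : op_sym S, ('I_(arity f) -> carrier) -> carrier }.

Inductive term (S : signature) (V : Type) : Type :=
  | Var : V -> term S V
  | App : forall f : op_sym S, ('I_(arity f) -> term S V) -> term S V.

Fixpoint eval (S : signature) (A : algebra S) (V : Type) (env : V -> A)
  (t : term S V) : A :=
  match t with
  | Var v => env v
  | App f args => interp (fun i => eval env (args i))
  end.

Definition subuniverse (S : signature) (A : algebra S) (B : A -> Prop) : Prop :=
  forall (f : op_sym S) (a : 'I_(arity f) -> A),
    (forall i, B (a i)) -> B (interp a).

Definition idempotent_term (S : signature) (A : algebra S) (n : nat)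
  (t : term S 'I_n) : Prop :=
  forall x : A, eval (fun _ => x) t = x.

Definition absorbs (S : signature) (A : algebra S) (B : A -> Prop) : Prop :=
  exists (n : nat) (t : term S 'I_n),
    idempotent_term A t /\
    forall a : 'I_n -> A,
      (forall i j : 'I_n, ~ B (a i) -> ~ B (a j) -> i = j) ->
      B (eval a t).

Definition env3 (S : signature) (A : algebra S) (x y z : A) : 'I_3 -> A :=
  fun i => nth x [:: x; y; z] i.

Definition eval3 (S : signature) (A : algebra S) (t : term S 'I_3) (x y z : A) : A :=
  eval (env3 x y z) t.

Definition jonsson_absorbs (S : signature) (A : algebra S) (B : A -> Prop) : Prop :=
  exists (n : nat) (d : nat -> term S 'I_3),
    (forall i, i <= n -> forall (b b' a : A), B b -> B b' -> B (eval3 (d i) b a b')) /\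
    (forall i, i < n -> forall x y : A, eval3 (d i) x y y = eval3 (d i.+1) x x y) /\
    (forall x y z : A, eval3 (d 0) x y z = x) /\
    (forall x y z : A, eval3 (d n) x y z = z).

(* If t is an n-ary absorbing term, set d_k(x,y,z) := t(z,...,z,y,x,...,x)
   with y in position k (counting from 1), for 0 <= k <= n+1; for k = 0 and
   k = n+1 the y falls off an end.  Idempotence of t gives d_0 = x and
   d_(n+1) = z, replacing y by the neighbouring letter turns d_k(x,y,y) and
   d_(k+1)(x,x,y) into the same instance of t, and in d_k(b,a,b') only
   position k can hold an element outside B, so absorption applies. *)

From Stdlib Require Import FunctionalExtensionality.
From mathcomp Require Import all_boot.
Set Implicit Arguments. Unset Strict Implicit.

Fixpoint rename (S : signature) (V W : Type) (r : V -> W) (t : term S V) :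
    term S W :=
  match t with
  | Var v => Var S (r v)
  | App f args => App (fun i => rename r (args i))
  end.

Section Evaluation.

Variables (S : signature) (A : algebra S).

Lemma eq_eval (V : Type) (e1 e2 : V -> A) (t : term S V) :
  e1 =1 e2 -> eval e1 t = eval e2 t.
Proof.
move=> e12; elim: t => [v|f args IH] /=; first exact: e12.
by congr interp; apply: functional_extensionality.
Qed.

Lemma eval_rename (V W : Type) (e : W -> A) (r : V -> W) (t : term S V) :
  eval e (rename r t) = eval (e \o r) t.
Proof.
elim: t => [v|f args IH] //=.
by congr interp; apply: functional_extensionality.
Qed.

Lemma idempotent_eval_const (n : nat) (t : term S 'I_n) (e : 'I_n -> A) (x : A) :
  idempotent_term A t -> (forall p, e p = x) -> eval e t = x.
Proof. by move=> idt ex; rewrite -[RHS]idt; apply: eq_eval. Qed.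

End Evaluation.

Definition stair (k p : nat) : 'I_3 :=
  inord (if p.+1 < k then 2 else if p.+1 == k then 1 else 0).

Definition jonsson_chain (S : signature) (n : nat) (t : term S 'I_n) (k : nat) :
    term S 'I_3 :=
  rename (fun p : 'I_n => stair k p) t.

Section Staircase.

Variables (S : signature) (A : algebra S).

Lemma env3_stair (x y z : A) (k p : nat) :
  env3 x y z (stair k p) = if p.+1 < k then z else if p.+1 == k then y else x.
Proof. by rewrite /env3 inordK; case: ifP => //; case: ifP. Qed.

Lemma env3_stair0 (x y z : A) (p : nat) : env3 x y z (stair 0 p) = x.
Proof. by rewrite env3_stair. Qed.

Lemma env3_stair_top (x y z : A) (n p : nat) :
  p < n -> env3 x y z (stair n.+1 p) = z.
Proof. by move=> pn; rewrite env3_stair ltnS pn. Qed.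

Lemma env3_stairS (x y : A) (k p : nat) :
  env3 x y y (stair k p) = env3 x x y (stair k.+1 p).
Proof.
rewrite !env3_stair ltnS.
by case: ltngtP => //; case: ifP.
Qed.

Lemma env3_stair_other (x y z : A) (k p : nat) :
  p.+1 != k -> env3 x y z (stair k p) = x \/ env3 x y z (stair k p) = z.
Proof. by rewrite env3_stair => /negbTE ->; case: ifP; [right|left]. Qed.

Lemma stair_absorbing (B : A -> Prop) (b a b' : A) (k p q : nat) :
  B b -> B b' ->
  ~ B (env3 b a b' (stair k p)) -> ~ B (env3 b a b' (stair k q)) -> p = q.
Proof.
move=> Bb Bb' notBp notBq.
have at_k r : ~ B (env3 b a b' (stair k r)) -> r.+1 = k.
  move=> notBr; case: (eqVneq r.+1 k) => // /(env3_stair_other b a b').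
  by case=> e; case: notBr; rewrite e.
by apply: succn_inj; rewrite (at_k p notBp) (at_k q notBq).
Qed.

End Staircase.

Theorem proposition2p2 (S : signature) (A : algebra S) (B : A -> Prop) :
  subuniverse B -> absorbs B -> jonsson_absorbs B.
Proof.
move=> _ [n [t [idt absorbing]]].
exists n.+1, (jonsson_chain t); rewrite /eval3 /jonsson_chain.
split; [|split; [|split]].
- move=> k _ b b' a Bb Bb'; rewrite eval_rename; apply: absorbing => p q.
  by move=> notBp notBq; apply/val_inj/(stair_absorbing Bb Bb' notBp notBq).
- move=> k _ x y; rewrite !eval_rename; apply: eq_eval => p.
  exact: env3_stairS.
- move=> x y z; rewrite eval_rename.
  by apply: idempotent_eval_const => // p; apply: env3_stair0.
- move=> x y z; rewrite eval_rename.
  by apply: idempotent_eval_const => // p; apply: env3_stair_top.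
Qed.
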